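(* Let $\lambda>0$, $A\in\mathbb{R}^{m\times n}$ with $m<n$ and $\dim\ker A=n-m$, $b\in\mathbb{R}^m$, let $q=q_1-q_2:\mathbb{R}^m\to[0,+\infty)$ where $q_1:\mathbb{R}^m\to\mathbb{R}$ is continuously differentiable with Lipschitz continuous gradient and $q_2:\mathbb{R}^m\to\mathbb{R}$ is convex and continuous, and let $\mathcal{X}\subseteq\mathbb{R}^n$ be a closed hyperrectangle (possibly unbounded) with $0\in\mathcal{X}$. Set $\Phi(x):=\lambda\frac{\|x\|_1^2}{\|x\|_2^2}+q(Ax-b)$ for $x\neq0$, $\nu^\star:=\inf\{\Phi(x):x\in\mathcal{X}\setminus\{0\}\}$, and assume $\nu^\star<\lambda+q(-b)$. Then the set of optimal solutions $\{x\in\mathcal{X}\setminus\{0\}:\Phi(x)=\nu^\star\}$ is nonempty if one of the following holds: (i) $\mathcal{X}$ is bounded; (ii) $q$ is coercive, $\ker A$ has the $s$-spherical section property for some $s>0$, and there exists $\widetilde{x}\in\mathbb{R}^n$ with $0\neq\widetilde{x}\in\arg\min_{x\in\mathcal{X}}q(Ax-b)$ and $\|\widetilde{x}\|_0<m/s$.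
   Context: A closed hyperrectangle is a set $\{x\in\mathbb{R}^n:\underline{x}\le x\le\overline{x}\}$ with $\underline{x}\in(\mathbb{R}\cup\{-\infty\})^n$, $\overline{x}\in(\mathbb{R}\cup\{+\infty\})^n$. $\|x\|_0$ is the number of nonzero entries of $x$. For positive integers $m<n$, an $(n-m)$-dimensional subspace $V\subseteq\mathbb{R}^n$ has the $s$-spherical section property if $\inf_{v\in V\setminus\{0\}}\|v\|_1/\|v\|_2\ge\sqrt{m/s}$. The inequality $\nu^\star<\lambda+q(-b)$ is a standing assumption of the paper. *)

From HB Require Import structures.
From mathcomp Require Import all_boot all_order all_algebra.
From mathcomp Require Import all_classical all_reals all_analysis.
Set Implicit Arguments. Unset Strict Implicit. Unset Printing Implicit Defensive.
Import Order.TTheory GRing.Theory Num.Theory.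
Import numFieldNormedType.Exports.
Local Open Scope classical_set_scope.
Local Open Scope ring_scope.

Section Defs.
Variable R : realType.

Definition l1norm n (x : 'cV[R]_n) : R := \sum_(i < n) `|x i 0|.
Definition l2norm n (x : 'cV[R]_n) : R := Num.sqrt (\sum_(i < n) (x i 0) ^+ 2).
Definition l0norm n (x : 'cV[R]_n) : nat := #|[set i : 'I_n | x i 0 != 0]|.

Definition is_hyperrectangle n (X : set 'cV[R]_n) : Prop :=
  exists (lo hi : 'I_n -> \bar R),
    (forall i, lo i != +oo%E) /\ (forall i, hi i != -oo%E) /\
    X = [set x | forall i, (lo i <= (x i 0)%:E <= hi i)%E].

Definition bounded_vset n (X : set 'cV[R]_n) : Prop :=
  exists M : R, forall x, X x -> forall i, `|x i 0| <= M.

Definition convex_fun m (f : 'cV[R]_m -> R) : Prop :=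
  forall x y (t : R), 0 <= t <= 1 ->
    f (t *: x + (1 - t) *: y) <= t * f x + (1 - t) * f y.

(* continuously differentiable with Lipschitz continuous gradient
   (gradient = Frechet derivative 'd f x, Lipschitz in operator norm w.r.t. the
   canonical (sup) norm of 'cV; all norms are equivalent in finite dimension) *)
Definition C1_lipschitz_grad m (f : 'cV[R]_m -> R) : Prop :=
  (forall x, differentiable f x) /\
  (forall v, continuous (fun y => 'd f y v)) /\
  exists L : R, forall x y v, `|'d f x v - 'd f y v| <= L * `|x - y| * `|v|.

Definition coercive m (f : 'cV[R]_m -> R) : Prop :=
  forall M : R, exists r : R, forall y, r <= l2norm y -> M <= f y.

Definition kerA m n (A : 'M[R]_(m, n)) : set 'cV[R]_n := [set v | A *m v = 0].

Definition spherical_section m n (V : set 'cV[R]_n) (s : R) : Prop :=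
  forall v, V v -> v != 0 -> Num.sqrt (m%:R / s) <= l1norm v / l2norm v.

Definition Phi m n (lambda : R) (q : 'cV[R]_m -> R) (A : 'M[R]_(m, n))
  (b : 'cV[R]_m) (x : 'cV[R]_n) : R :=
  lambda * (l1norm x ^+ 2 / l2norm x ^+ 2) + q (A *m x - b).

Definition nu_star m n (lambda : R) (q : 'cV[R]_m -> R) (A : 'M[R]_(m, n))
  (b : 'cV[R]_m) (X : set 'cV[R]_n) : \bar R :=
  ereal_inf [set (Phi lambda q A b x)%:E | x in X `\ 0].

End Defs.

From HB Require Import structures.
From mathcomp Require Import all_boot all_order all_algebra.
From mathcomp Require Import all_classical all_reals all_analysis.
Import Order.TTheory GRing.Theory Num.Theory.
Import numFieldNormedType.Exports.
Local Open Scope classical_set_scope.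
Local Open Scope ring_scope.

(* Since ||x||_1 >= ||x||_2, Phi x >= lambda + q (A x - b), which tends to
   lambda + q (-b) > nu* as x -> 0; so near the origin Phi stays above a level
   c > nu*.  Far from the origin it does too: vacuously if X is bounded, and in
   case (ii) because coercivity of q confines the points where q (A x - b) is
   small to a slab {|A x| <= W}.  On the slab x = v + P A x with A v = 0 and
   P A x bounded (P a right inverse of A), so the spherical section bound
   sqrt (m / s) ||v||_2 <= ||v||_1 makes ||x||_1^2 / ||x||_2^2 exceed any
   rho < m / s for large x; with ||xt||_0 < rho < m / s this puts Phi above
   lambda rho + q (A xt - b) > Phi xt >= nu*.  Hence nu* is the minimum of the
   continuous Phi on the compact set X /\ {delta <= |x| <= M} (|x| is the
   max-entry norm of matrices). *)

From mathcomp Require Import lra ring zify.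
Set Implicit Arguments. Unset Strict Implicit. Unset Printing Implicit Defensive.

Section matrix_norm.
Variable R : realType.

Lemma mx_norm_entry_le p k (M : 'M[R]_(p, k)) i j : `|M i j| <= `|M|.
Proof.
by rewrite (_ : `|M| = mx_norm M) // mx_normrE; exact: (le_bigmax _ _ (i, j)).
Qed.

Lemma mx_norm_le_entries p k (M : 'M[R]_(p, k)) e :
  0 <= e -> (forall i j, `|M i j| <= e) -> `|M| <= e.
Proof.
move=> e_ge0 Me; rewrite (_ : `|M| = mx_norm M) // mx_normrE.
by apply: bigmax_le => // -[i j] _.
Qed.

Lemma mx_norm_trmx p k (M : 'M[R]_(p, k)) : `|M^T| = `|M|.
Proof.
apply/le_anti/andP; split; apply: mx_norm_le_entries => // i j.
  by rewrite mxE; exact: mx_norm_entry_le.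
by have := mx_norm_entry_le M^T j i; rewrite mxE.
Qed.

Lemma mulmx_entry_le p k (M : 'M[R]_(p, k)) (w : 'cV[R]_k) W i :
  (forall j, `|w j 0| <= W) -> `|(M *m w) i 0| <= k%:R * (`|M| * W).
Proof.
move=> wW; rewrite mxE; apply: le_trans (ler_norm_sum _ _ _) _.
rewrite -[k in k%:R]card_ord mulr_natl -sumr_const; apply: ler_sum => j _.
by rewrite normrM ler_pM // mx_norm_entry_le.
Qed.

Lemma lipschitz_continuous (U V : normedModType R) (f : U -> V) (k : R) :
  k.-lipschitz f -> continuous f.
Proof.
move=> f_lip x; apply/cvgrPdist_lt => e e_gt0.
have ke_gt0 : 0 < e / (`|k| + 1) by rewrite divr_gt0 // ltr_wpDl.
near=> y.
have xy : `|x - y| < e / (`|k| + 1) by near: y; exact: cvgr_dist_lt.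
have := f_lip (x, y) (conj I I); rewrite /= => fxy.
apply: le_lt_trans fxy _.
apply: le_lt_trans (_ : `|k| * `|x - y| < e).
  by rewrite ler_wpM2r // ler_norm.
rewrite ltr_pdivlMr ?ltr_wpDl // in xy.
by have := normr_ge0 (x - y); nra.
Unshelve. all: by end_near.
Qed.

Lemma affine_continuous m n (A : 'M[R]_(m, n)) (b : 'cV[R]_m) :
  continuous (fun x : 'cV[R]_n => A *m x - b).
Proof.
apply: (@lipschitz_continuous _ _ _ (n%:R * `|A|)) => -[x y] _ /=.
rewrite opprB addrA subrK -mulmxBr.
apply: mx_norm_le_entries => [|i j]; first by rewrite !mulr_ge0.
by rewrite ord1 -mulrA; apply: mulmx_entry_le => k; exact: mx_norm_entry_le.
Qed.

Lemma cV_bounded_closed_compact n (K : set 'cV[R]_n) :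
  bounded_set K -> closed K -> compact K.
Proof.
move=> K_bd K_closed.
(* The library's Heine-Borel theorem is stated for row vectors: transpose. *)
have tr_cont p k : continuous (fun M : 'M[R]_(p, k) => M^T).
  apply: (@lipschitz_continuous _ _ _ 1) => -[x y] _ /=.
  by rewrite mul1r -linearB mx_norm_trmx.
have -> : K = (fun y : 'rV[R]_n => y^T) @` ((fun y => y^T) @^-1` K).
  apply/seteqP; split => [x Kx|_ [y Ky <-] //].
  by exists x^T; rewrite /= trmxK.
apply: continuous_compact; first exact/continuous_subspaceT/tr_cont.
apply: bounded_closed_compact.
  case: K_bd => M [M_real KM]; exists M; split => // N MN y Ky.
  have := KM N MN _ Ky; rewrite /= mx_norm_trmx; exact.
by apply: preimage_closed => // y _; exact: tr_cont.
Qed.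

Lemma EFin_continuous : continuous (@EFin R).
Proof. by move=> x; apply: cvg_EFin; [exact: nearW | exact: cvg_id]. Qed.

Lemma closed_hyperrectangle n (X : set 'cV[R]_n) : is_hyperrectangle X -> closed X.
Proof.
move=> [lo [hi [_ [_ XE]]]].
have -> : X = \bigcap_i ([set x : 'cV[R]_n | (lo i <= (x i 0)%:E)%E] `&`
                       [set x | ((x i 0)%:E <= hi i)%E]).
  by rewrite XE; apply/seteqP; split => x /= xX i; [move=> _; apply/andP | apply/andP/xX].
apply: closed_bigI => i _.
have coordE_closed (D : set (\bar R)) :
    closed D -> closed ((fun x : 'cV[R]_n => (x i 0)%:E) @^-1` D).
  apply: preimage_closed => x _.
  by apply: continuous_comp; [exact: coord_continuous | exact: EFin_continuous].
apply: closedI.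
  exact: coordE_closed _ (@closed_ereal_le_ereal _ (lo i)).
exact: coordE_closed _ (@closed_ereal_ge_ereal _ (hi i)).
Qed.

End matrix_norm.

Section finite_sums.
Variable R : realType.

Lemma sum_CauchySchwarz (I : finType) (a b : I -> R) :
  (\sum_i a i * b i) ^+ 2 <= (\sum_i a i ^+ 2) * (\sum_i b i ^+ 2).
Proof.
(* Lagrange's identity: the double sum of the (a i b j - a j b i)^2 is 2 (A2 B2 - C^2). *)
set C := \sum_i a i * b i; set A2 := \sum_i a i ^+ 2; set B2 := \sum_i b i ^+ 2.
have inner i : \sum_j (a i * b j - a j * b i) ^+ 2 =
    a i ^+ 2 * B2 - 2 * (a i * b i) * C + b i ^+ 2 * A2.
  rewrite (eq_bigr (fun j => a i ^+ 2 * b j ^+ 2 - 2 * (a i * b i) * (a j * b j)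
                             + b i ^+ 2 * a j ^+ 2)) => [|j _]; last by ring.
  by rewrite big_split sumrB /= -!mulr_sumr.
have : 0 <= \sum_i \sum_j (a i * b j - a j * b i) ^+ 2.
  by do 2![apply: sumr_ge0 => ? _]; exact: sqr_ge0.
rewrite (eq_bigr _ (fun i _ => inner i)) big_split sumrB /= -!mulr_suml -mulr_sumr.
rewrite -/A2 -/B2 -/C; nra.
Qed.

End finite_sums.

Section lp_norms.
Variables (R : realType) (n : nat).
Implicit Types (x u v : 'cV[R]_n).

Lemma l1norm_ge0 x : 0 <= l1norm x.
Proof. exact: sumr_ge0. Qed.

Lemma l2norm_ge0 x : 0 <= l2norm x.
Proof. exact: sqrtr_ge0. Qed.

Lemma l2norm_sqr x : l2norm x ^+ 2 = \sum_i x i 0 ^+ 2.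
Proof. by rewrite sqr_sqrtr // sumr_ge0 // => i _; exact: sqr_ge0. Qed.

Lemma entry_sqr_le_l2norm_sqr x i : x i 0 ^+ 2 <= l2norm x ^+ 2.
Proof.
by rewrite l2norm_sqr (bigD1 i) //= lerDl sumr_ge0 // => j _; exact: sqr_ge0.
Qed.

Lemma l2norm_gt0 x : x != 0 -> 0 < l2norm x.
Proof.
move=> x_neq0; have [i xi_neq0] : exists i, x i 0 != 0.
  apply/existsP; apply: contraNT x_neq0; rewrite negb_exists => /forallP x0.
  by apply/eqP/matrixP => i j; rewrite ord1 mxE; apply/eqP/negbNE/x0.
rewrite lt_def l2norm_ge0 andbT; apply: contra xi_neq0 => /eqP l2x0.
have := entry_sqr_le_l2norm_sqr x i; rewrite l2x0 expr0n /= => xi2_le0.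
by rewrite -sqrf_eq0 eq_le xi2_le0 sqr_ge0.
Qed.

Lemma entry_le_l2norm x i : `|x i 0| <= l2norm x.
Proof.
rewrite -(@ler_pXn2r _ 2) ?nnegrE ?l2norm_ge0 // real_normK ?num_real //.
exact: entry_sqr_le_l2norm_sqr.
Qed.

Lemma mx_norm_le_l2norm x : `|x| <= l2norm x.
Proof.
by apply: mx_norm_le_entries (l2norm_ge0 x) _ => i j; rewrite ord1; exact: entry_le_l2norm.
Qed.

Lemma l2norm_le_l1norm x : l2norm x <= l1norm x.
Proof.
have entry_le i : `|x i 0| <= l1norm x.
  by rewrite /l1norm (bigD1 i) //= lerDl sumr_ge0.
rewrite -(@ler_pXn2r _ 2) ?nnegrE ?l2norm_ge0 ?l1norm_ge0 // l2norm_sqr expr2.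
rewrite [X in _ <= X * _]/l1norm mulr_suml; apply: ler_sum => i _.
by rewrite -real_normK ?num_real // expr2 ler_wpM2l.
Qed.

Lemma l1norm_le_entries x B : (forall i, `|x i 0| <= B) -> l1norm x <= n%:R * B.
Proof.
by move=> xB; rewrite -[n in n%:R]card_ord mulr_natl -sumr_const; exact: ler_sum.
Qed.

Lemma l1norm_sqr_le_l0norm x : l1norm x ^+ 2 <= (l0norm x)%:R * l2norm x ^+ 2.
Proof.
(* Cauchy-Schwarz against the indicator of the support of x. *)
pose nz i := (x i 0 != 0)%:R : R.
have l1E : l1norm x = \sum_i `|x i 0| * nz i.
  by apply: eq_bigr => i _; rewrite /nz; case: eqP => [->|]; rewrite ?normr0 ?mulr1 ?mulr0.
have l0E : (l0norm x)%:R = \sum_i nz i ^+ 2.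
  rewrite /l0norm -sum1_card natr_sum big_mkcond; apply: eq_bigr => i _.
  rewrite /nz; have [xi|xi] := boolP (x i 0 != 0).
    by rewrite mem_set // expr1n.
  by rewrite memNset ?expr0n //; exact/negP.
have absE : \sum_i `|x i 0| ^+ 2 = \sum_i x i 0 ^+ 2.
  by apply: eq_bigr => i _; rewrite real_normK ?num_real.
by rewrite l1E l0E l2norm_sqr mulrC -absE; exact: sum_CauchySchwarz.
Qed.

Lemma lerB_l1normD u v : l1norm u - l1norm v <= l1norm (u + v).
Proof.
rewrite /l1norm -sumrB; apply: ler_sum => i _; rewrite mxE lerBlDr.
by have := ler_normD (u i 0 + v i 0) (- v i 0); rewrite addrK normrN.
Qed.

Lemma ler_l2normD u v : l2norm (u + v) <= l2norm u + l2norm v.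
Proof.
have uv_le : \sum_i u i 0 * v i 0 <= l2norm u * l2norm v.
  have := sum_CauchySchwarz (fun i => u i 0) (fun i => v i 0).
  rewrite -!l2norm_sqr -exprMn => cs.
  by have := mulr_ge0 (l2norm_ge0 u) (l2norm_ge0 v); nra.
rewrite -(@ler_pXn2r _ 2) ?nnegrE ?addr_ge0 ?l2norm_ge0 // sqrrD !l2norm_sqr.
under eq_bigr do rewrite mxE sqrrD.
by rewrite !big_split /= lerD2r lerD2l mulr2n lerD.
Qed.

Lemma l1norm_continuous : continuous (@l1norm R n).
Proof.
apply: (continuous_big (F := fun i (x : 'cV[R]_n) => `|x i 0|) add_continuous).
move=> i _ x.
exact: continuous_comp (@coord_continuous _ _ _ i 0 x) (@norm_continuous _ R^o _).
Qed.

Lemma l2norm_continuous : continuous (@l2norm R n).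
Proof.
have sum_sqr_cont : continuous (fun x : 'cV[R]_n => \sum_i x i 0 ^+ 2).
  apply: (continuous_big (F := fun i (x : 'cV[R]_n) => x i 0 ^+ 2) add_continuous).
  move=> i _ x.
  exact: continuous_comp (@coord_continuous _ _ _ i 0 x) (@exprn_continuous _ 2 _).
by move=> x; apply: continuous_comp; [exact: sum_sqr_cont | exact: sqrt_continuous].
Qed.

End lp_norms.

Section attainment.
Variable R : realType.

Lemma ereal_inf_attained (T : topologicalType) (f : T -> R) (S K : set T) (c : R) :
  compact K -> K `<=` S -> {within K, continuous f} ->
  (ereal_inf [set (f x)%:E | x in S] < c%:E)%E ->
  (forall x, S x -> ~ K x -> c <= f x) ->
  exists2 x, S x & (f x)%:E = ereal_inf [set (f x)%:E | x in S].
Proof.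
move=> K_compact KS f_cont inf_lt f_outside.
have [_ [x1 Sx1 <-]] := ereal_inf_lt inf_lt; rewrite lte_fin => fx1_lt.
have Kx1 : K x1 by apply: contrapT => /(f_outside _ Sx1); rewrite leNgt fx1_lt.
have [x0 /set_mem Kx0 x0_min] := compact_EVT_min (ex_intro _ x1 Kx1) K_compact f_cont.
exists x0; first exact: KS.
apply/le_anti/andP; split; last by apply: ereal_inf_lbound; exists x0 => //; exact: KS.
apply: le_ereal_inf_tmp => _ [y Sy <-]; rewrite lee_fin.
have [Ky|Ky] := pselect (K y); first exact/x0_min/mem_set.
by apply: le_trans (f_outside _ Sy Ky); apply: le_trans (ltW fx1_lt); exact/x0_min/mem_set.
Qed.

Lemma ereal_inf_attained_off_annulus n (f : 'cV[R]_n -> R) (X : set 'cV[R]_n)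
    (delta M c : R) :
  closed X -> 0 < delta -> (forall x, x != 0 -> {for x, continuous f}) ->
  (ereal_inf [set (f x)%:E | x in X `\ 0%R] < c%:E)%E ->
  (forall x, X x -> x != 0 -> `|x| < delta \/ M < `|x| -> c <= f x) ->
  exists x, X x /\ x != 0 /\ (f x)%:E = ereal_inf [set (f x)%:E | x in X `\ 0].
Proof.
move=> X_closed delta_gt0 f_cont inf_lt f_outside.
pose nrm := fun x : 'cV[R]_n => `|x|.
pose K := X `&` nrm @^-1` [set r | delta <= r] `&` nrm @^-1` [set r | r <= M].
have K_neq0 x : K x -> x != 0.
  by move=> [[_ /= x_ge] _]; rewrite -normr_gt0 (lt_le_trans delta_gt0).
suff [x [Xx /eqP x_neq0] fx] : exists2 x, (X `\ 0) x &
    (f x)%:E = ereal_inf [set (f x)%:E | x in X `\ 0] by exists x.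
apply: (@ereal_inf_attained _ f _ K c) => //.
- apply: cV_bounded_closed_compact.
    exists M; split; first exact: num_real.
    by move=> N MN x [_ /= x_le]; exact: le_trans (ltW MN).
  apply: closedI; first apply: closedI => //.
    by apply: preimage_closed; [move=> x _; exact: norm_continuous | exact: closed_ge].
  by apply: preimage_closed; [move=> x _; exact: norm_continuous | exact: closed_le].
- by move=> x Kx; split; [case: Kx => -[] | exact/eqP/K_neq0].
- by apply: continuous_in_subspaceT => x /set_mem /K_neq0; exact: f_cont.
- move=> x [Xx /eqP x_neq0] Kx; apply: f_outside => //.
  have [|delta_le] := ltP `|x| delta; [by left | right].
  by rewrite ltNge; apply/negP => x_le; apply: Kx.
Qed.

End attainment.

Section kernel_slab.
Variables (R : realType) (m n : nat) (A : 'M[R]_(m, n)).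

Lemma row_free_kermx_tr_rank :
  (m <= n)%N -> \rank (kermx A^T) = (n - m)%N -> row_free A.
Proof.
move=> le_mn; rewrite mxrank_ker mxrank_tr /row_free => rankA.
by have := rank_leq_row A; lia.
Qed.

Lemma spherical_section_l1norm_ge s : 0 < s -> spherical_section m (kerA A) s ->
  forall v, A *m v = 0 -> Num.sqrt (m%:R / s) * l2norm v <= l1norm v.
Proof.
move=> s_gt0 sph v Av; have [->|v_neq0] := eqVneq v 0.
  by rewrite /l2norm big1 ?sqrtr0 ?mulr0 ?l1norm_ge0 // => i _; rewrite mxE expr0n.
by rewrite -ler_pdivlMr ?l2norm_gt0 //; exact: sph.
Qed.

Lemma l1norm_ge_on_slab (sigma kappa W : R) :
  row_free A -> 0 <= kappa -> kappa < sigma ->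
  (forall v, A *m v = 0 -> sigma * l2norm v <= l1norm v) ->
  exists M, forall x, (forall j, `|(A *m x) j 0| <= W) -> M < `|x| ->
    kappa * l2norm x <= l1norm x.
Proof.
move=> /row_freeP [P AP] kappa_ge0 kappa_lt ker_bound.
pose D := n%:R * (m%:R * (`|P| * W)).
exists (D + (1 + kappa) * D / (sigma - kappa)) => x slab Mx.
pose u := P *m (A *m x); pose v := x - u.
have Av : A *m v = 0 by rewrite mulmxBr !mulmxA AP mul1mx subrr.
have l1u : l1norm u <= D by apply: l1norm_le_entries => i; exact: mulmx_entry_le.
have xE : x = v + u by rewrite subrK.
have l1x : l1norm v - D <= l1norm x.
  by rewrite xE; apply: le_trans (lerB_l1normD v u); rewrite lerD2l lerN2.
have l2x : l2norm x <= l2norm v + D.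
  rewrite xE; apply: le_trans (ler_l2normD v u) _.
  by rewrite lerD2l (le_trans (l2norm_le_l1norm u)).
have l2v : (1 + kappa) * D / (sigma - kappa) < l2norm v.
  have := mx_norm_le_l2norm x; lra.
rewrite ltr_pdivrMr ?subr_gt0 // in l2v.
have := ker_bound v Av; nra.
Qed.

End kernel_slab.

Section objective.
Variables (R : realType) (m n : nat) (lambda : R) (q : 'cV[R]_m -> R).
Variables (A : 'M[R]_(m, n)) (b : 'cV[R]_m).
Hypothesis lambda_gt0 : 0 < lambda.
Local Notation Phi := (Phi lambda q A b).

Lemma Phi_ge_ratio x kappa : x != 0 -> 0 <= kappa ->
  kappa * l2norm x <= l1norm x -> lambda * kappa ^+ 2 + q (A *m x - b) <= Phi x.
Proof.
move=> x_neq0 kappa_ge0 kappa_le; rewrite /Phi lerD2r ler_pM2l //.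
rewrite ler_pdivlMr ?exprn_gt0 ?l2norm_gt0 // -exprMn.
by rewrite ler_pXn2r ?nnegrE ?mulr_ge0 ?l2norm_ge0 ?l1norm_ge0.
Qed.

Lemma Phi_ge x : x != 0 -> lambda + q (A *m x - b) <= Phi x.
Proof.
move=> x_neq0; have := Phi_ge_ratio x_neq0 ler01; rewrite expr1n mulr1 mul1r.
by apply; exact: l2norm_le_l1norm.
Qed.

Lemma Phi_le_l0norm x : x != 0 -> Phi x <= lambda * (l0norm x)%:R + q (A *m x - b).
Proof.
move=> x_neq0; rewrite /Phi lerD2r ler_pM2l // ler_pdivrMr ?exprn_gt0 ?l2norm_gt0 //.
exact: l1norm_sqr_le_l0norm.
Qed.

Lemma Phi_ge_far (X : set 'cV[R]_n) s xt :
  row_free A -> coercive q -> 0 < s -> spherical_section m (kerA A) s ->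
  xt != 0 -> (forall x, X x -> q (A *m xt - b) <= q (A *m x - b)) ->
  (l0norm xt)%:R < m%:R / s ->
  exists M c, Phi xt < c /\ forall x, X x -> x != 0 -> M < `|x| -> c <= Phi x.
Proof.
move=> A_free q_coercive s_gt0 sph xt_neq0 xt_min l0_lt.
pose rho := ((l0norm xt)%:R + m%:R / s) / 2.
have l0_ge0 : 0 <= (l0norm xt)%:R :> R by [].
have rho_gt0 : 0 < rho by rewrite /rho; lra.
have [r coer_r] := q_coercive (lambda * rho + q (A *m xt - b)).
have sqrt_rho_lt : Num.sqrt rho < Num.sqrt (m%:R / s).
  by rewrite ltr_sqrt /rho; lra.
have [M slab_bound] := l1norm_ge_on_slab (r + `|b|) A_free (sqrtr_ge0 rho)
  sqrt_rho_lt (spherical_section_l1norm_ge s_gt0 sph).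
exists M, (lambda * rho + q (A *m xt - b)); split.
  apply: le_lt_trans (Phi_le_l0norm xt_neq0) _; rewrite ltrD2r ltr_pM2l //.
  by rewrite /rho; lra.
move=> x Xx x_neq0 Mx.
have [q_large|q_small] := leP (lambda * rho + q (A *m xt - b)) (q (A *m x - b)).
  by apply: le_trans q_large (le_trans _ (Phi_ge x_neq0)); rewrite lerDr ltW.
have Axb_small : l2norm (A *m x - b) < r.
  by rewrite ltNge; apply: contraTN q_small => /coer_r; rewrite -leNgt.
have slab j : `|(A *m x) j 0| <= r + `|b|.
  have -> : (A *m x) j 0 = (A *m x - b) j 0 + b j 0 by rewrite !mxE subrK.
  apply: le_trans (ler_normD _ _) _; apply: lerD; last exact: mx_norm_entry_le.
  exact: le_trans (entry_le_l2norm _ _) (ltW Axb_small).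
have := Phi_ge_ratio x_neq0 (sqrtr_ge0 rho) (slab_bound x slab Mx).
by rewrite sqr_sqrtr ?(ltW rho_gt0); have := xt_min x Xx; lra.
Qed.

Hypothesis q_continuous : continuous q.

Lemma Phi_continuous_at x : x != 0 -> {for x, continuous Phi}.
Proof.
move=> x_neq0.
have -> : Phi = (fun=> lambda) \* ((@l1norm R n \* @l1norm R n) \*
    (fun y => (l2norm y * l2norm y)^-1)) + (q \o (fun y => A *m y - b)).
  by apply/funext => y; rewrite /= /Phi !expr2.
apply: continuousD; last first.
  by apply: continuous_comp; [exact: affine_continuous | exact: q_continuous].
apply: continuousM; first exact: cst_continuous.
apply: continuousM; first by apply: continuousM; exact: l1norm_continuous.
apply: continuousV; first by rewrite mulf_neq0 // gt_eqF // l2norm_gt0.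
by apply: continuousM; exact: l2norm_continuous.
Qed.

Lemma Phi_gt_near0 w : w < lambda + q (- b) ->
  exists2 delta, 0 < delta & forall x, x != 0 -> `|x| < delta -> w < Phi x.
Proof.
move=> w_lt.
have qA_cont : {for 0, continuous (q \o (fun x : 'cV[R]_n => A *m x - b))}.
  by apply: continuous_comp; [exact: affine_continuous | exact: q_continuous].
have : \forall x \near (0 : 'cV[R]_n), `|q (- b) - q (A *m x - b)| < lambda + q (- b) - w.
  by have := cvgr_dist_lt _ _ qA_cont; rewrite /= mulmx0 sub0r; apply; rewrite subr_gt0.
move=> /nbhs_normP [delta delta_gt0 near0]; exists delta => // x x_neq0 x_lt.
have := near0 x; rewrite /ball_ /= sub0r normrN => /(_ x_lt) qx_near.
have := Phi_ge x_neq0; have := ler_norm (q (- b) - q (A *m x - b)); lra.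
Qed.

Lemma Phi_inf_attained (X : set 'cV[R]_n) (M c : R) :
  closed X -> (nu_star lambda q A b X < (lambda + q (- b))%:E)%E ->
  (nu_star lambda q A b X < c%:E)%E ->
  (forall x, X x -> x != 0 -> M < `|x| -> c <= Phi x) ->
  exists x, X x /\ x != 0 /\ (Phi x)%:E = nu_star lambda q A b X.
Proof.
move=> X_closed nu_lt nu_lt_c Phi_far.
have [_ [x1 X0x1 <-]] := ereal_inf_lt nu_lt; rewrite lte_fin => Phi_x1.
pose w := (Phi x1 + (lambda + q (- b))) / 2.
have [|delta delta_gt0 Phi_near0] := Phi_gt_near0 (w := w); first by rewrite /w; lra.
have nu_lt_w : (nu_star lambda q A b X < w%:E)%E.
  apply: (@le_lt_trans _ _ (Phi x1)%:E); first by apply: ereal_inf_lbound; exists x1.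
  by rewrite lte_fin /w; lra.
apply: (ereal_inf_attained_off_annulus (delta := delta) (M := M) (c := Num.min w c)) => //.
- exact: Phi_continuous_at.
- by rewrite EFin_min lt_min nu_lt_w nu_lt_c.
- move=> x Xx x_neq0 [x_small | x_large]; rewrite ge_min.
    by rewrite ltW ?Phi_near0.
  by rewrite Phi_far ?orbT.
Qed.

End objective.

Lemma bounded_vset_mx_norm (R : realType) n (X : set 'cV[R]_n) :
  bounded_vset X -> exists M, forall x, X x -> `|x| <= M.
Proof.
move=> [M XM]; exists (Num.max 0 M) => x Xx.
apply: mx_norm_le_entries => [|i j]; first by rewrite le_max lexx.
by rewrite ord1 le_max XM ?orbT.
Qed.

Unset Implicit Arguments.

Theorem theorem3p1 (R : realType) (m n : nat) (lambda : R)
  (A : 'M[R]_(m, n)) (b : 'cV[R]_m) (q1 q2 : 'cV[R]_m -> R)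
  (X : set 'cV[R]_n) :
  0 < lambda ->
  (m < n)%N ->
  \rank (kermx A^T) = (n - m)%N ->
  C1_lipschitz_grad q1 ->
  convex_fun q2 -> continuous q2 ->
  (forall y, 0 <= q1 y - q2 y) ->
  is_hyperrectangle X -> X 0 ->
  (nu_star lambda (fun y => (q1 y - q2 y)%R) A b X
     < (lambda + (q1 (- b) - q2 (- b)))%R%:E)%E ->
  (bounded_vset X \/
   (coercive (fun y => q1 y - q2 y) /\
    exists s : R, 0 < s /\ spherical_section m (kerA A) s /\
    exists xt : 'cV[R]_n, xt != 0 /\ X xt /\
      (forall x, X x -> q1 (A *m xt - b) - q2 (A *m xt - b)
                         <= q1 (A *m x - b) - q2 (A *m x - b)) /\
      (l0norm xt)%:R < m%:R / s)) ->
  exists x, X x /\ x != 0 /\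
    ((Phi lambda (fun y => q1 y - q2 y) A b x)%:E
       = nu_star lambda (fun y => q1 y - q2 y) A b X).
Proof.
move=> lambda_gt0 lt_mn rank_ker [q1_diff _] _ q2_cont _ X_box _ nu_lt cases.
set q := fun y => q1 y - q2 y in nu_lt cases *.
have q_cont : continuous q.
  by move=> y; apply: continuousB (differentiable_continuous (q1_diff y)) (q2_cont y).
have X_closed := closed_hyperrectangle X_box.
case: cases => [/bounded_vset_mx_norm [M XM] | [q_coer [s [s_gt0 [sph [xt]]]]]].
  apply: (Phi_inf_attained lambda_gt0 q_cont (M := M) X_closed nu_lt nu_lt).
  by move=> x /XM x_le _; rewrite ltNge x_le.
move=> [xt_neq0 [Xxt [xt_min l0_lt]]].
have A_free := row_free_kermx_tr_rank (ltnW lt_mn) rank_ker.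
have [M [c [Phi_xt Phi_far]]] :=
  Phi_ge_far lambda_gt0 A_free q_coer s_gt0 sph xt_neq0 xt_min l0_lt.
apply: (Phi_inf_attained lambda_gt0 q_cont X_closed nu_lt _ Phi_far).
apply: le_lt_trans (_ : _ <= (Phi lambda q A b xt)%:E)%E _; last by rewrite lte_fin.
by apply: ereal_inf_lbound; exists xt => //; split => //; exact/eqP.
Qed.
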